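(* Let $X$ be a set and $\tau$ a Hausdorff topology on $I(X)$ making it a topological inverse semigroup. Then the map $2^X\to(I(X),\tau)$, $A\mapsto 1_A$, is continuous if and only if the set of idempotents $\{1_A: A\subseteq X\}$ of $I(X)$ is $\tau$-compact.
   Context: $I(X)$ is the set of all bijections $f:A\to B$ with $A,B\subseteq X$ (including the empty map), with composition $\mathrm{dom}(f\circ g)=g^{-1}(\mathrm{dom}(f)\cap\mathrm{im}(g))$, $(f\circ g)(x)=f(g(x))$ and inverse $f^{-1}$. $1_A$ denotes the identity map on $A\subseteq X$; these are exactly the idempotents of $I(X)$. $2^X$ is the power set of $X$ with the product topology (identified with $\{0,1\}^X$). A topological inverse semigroup is one where multiplication and inversion are continuous. *)

From HB Require Import structures.
From mathcomp Require Import all_boot all_order.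
From mathcomp Require Import all_classical.
From mathcomp Require Import topology.
Set Implicit Arguments. Unset Strict Implicit. Unset Printing Implicit Defensive.
Local Open Scope classical_set_scope.

(* A partial bijection f : A -> B with A, B ⊆ X is encoded as a partial
   function X -> option X (None = undefined) which is injective on its
   domain; its domain is {x | f x <> None} and its image {y | exists x, f x = Some y}. *)
Record pbij (X : Type) := PBij {
  pfun :> X -> option X ;
  pfun_inj : forall x y z, pfun x = Some z -> pfun y = Some z -> x = y }.

Section IX.
Variable X : Type.

Definition pcomp_fun (f g : pbij X) : X -> option X :=
  fun x => match g x with Some y => f y | None => None end.

Lemma pcomp_inj (f g : pbij X) x y z :
  pcomp_fun f g x = Some z -> pcomp_fun f g y = Some z -> x = y.
Proof.
rewrite /pcomp_fun.
case Hx: (g x) => [x'|] //; case Hy: (g y) => [y'|] // fx fy.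
have e : x' = y' by exact: (pfun_inj fx fy).
by subst y'; exact: (pfun_inj Hx Hy).
Qed.

Definition pcomp (f g : pbij X) : pbij X := PBij (@pcomp_inj f g).

Definition pinv_fun (f : pbij X) : X -> option X :=
  fun y => match pselect (exists x, f x = Some y) with
           | left ex => Some (projT1 (cid ex))
           | right _ => None end.

Lemma pinv_inj (f : pbij X) x y z :
  pinv_fun f x = Some z -> pinv_fun f y = Some z -> x = y.
Proof.
rewrite /pinv_fun.
case: pselect => [ex|] //; case: pselect => [ey|] //.
case: (cid ex) => a /= fa; case: (cid ey) => b /= fb [<-] [e].
by subst b; rewrite fa in fb; case: fb.
Qed.

Definition pinv (f : pbij X) : pbij X := PBij (@pinv_inj f).

(* the partial identity 1_A, for A ⊆ X encoded as A : X -> bool *)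
Definition pid_fun (A : X -> bool) : X -> option X :=
  fun x => if A x then Some x else None.

Lemma pid_inj (A : X -> bool) x y z :
  pid_fun A x = Some z -> pid_fun A y = Some z -> x = y.
Proof. by rewrite /pid_fun; case: (A x) => // -[->]; case: (A y) => // -[->]. Qed.

Definition pid (A : X -> bool) : pbij X := PBij (@pid_inj A).

Definition idempotents : set (pbij X) := [set e | exists A, e = pid A].
End IX.

Section Topo.
Variable T : Type.

Definition is_topology (tau : set (set T)) : Prop :=
  [/\ tau setT,
      (forall (I : Type) (U : I -> set T), (forall i, tau (U i)) ->
          tau (\bigcup_i U i)) &
      (forall U V, tau U -> tau V -> tau (U `&` V))].

Definition hausdorff_top (tau : set (set T)) : Prop :=
  forall x y : T, x <> y ->
    exists U V, [/\ tau U, tau V, U x, V y & U `&` V = set0].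

Definition compact_in (tau : set (set T)) (K : set T) : Prop :=
  forall (I : Type) (U : I -> set T), (forall i, tau (U i)) ->
    K `<=` \bigcup_i U i ->
    exists F : set I, finite_set F /\ K `<=` \bigcup_(i in F) U i.
End Topo.

Definition prod_top (S T : Type) (sig : set (set S)) (tau : set (set T))
  : set (set (S * T)) :=
  [set W | forall p, W p ->
     exists U V, [/\ sig U, tau V, U p.1, V p.2 &
                     (forall a b, U a -> V b -> W (a, b))]].

Definition cont_top (S T : Type) (sig : set (set S)) (tau : set (set T))
  (f : S -> T) : Prop :=
  forall W, tau W -> sig (f @^-1` W).

Definition top_inverse_semigroup (X : Type) (tau : set (set (pbij X))) : Prop :=
  is_topology tau /\
  cont_top (prod_top tau tau) tau (fun p => pcomp p.1 p.2) /\
  cont_top tau tau (@pinv X).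

From Pilot Require Import Defs.
From HB Require Import structures.
From mathcomp Require Import all_boot all_order.
From mathcomp Require Import all_classical.
From mathcomp Require Import topology.
From mathcomp Require Import finmap.
Set Implicit Arguments. Unset Strict Implicit. Unset Printing Implicit Defensive.
Local Open Scope classical_set_scope.

(* (=>) 2^X is compact (Tychonoff), and E is the image of 2^X under the map
        A |-> 1_A; a continuous image of a compact set is compact.
   (<=) Let 1_A lie in an open set W.  For x ∈ X let p_x = 1_{x}.  Right
        multiplication by p_x is continuous and tau is Hausdorff, so
        V_x = {f | f p_x <> 1_A p_x} is open; since 1_D p_x is p_x or the
        empty map according as x ∈ D, we have 1_D ∈ V_x iff D x <> A x.
        W together with all V_x covers E; a finite subcover uses finitely
        many points x_1, ..., x_n, and every B agreeing with A at these
        points satisfies 1_B ∈ W.  These B form a neighbourhood of A in 2^X. *)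

Lemma compact_in_image (T : ptopologicalType) (Y : Type) (tau : set (set Y))
    (f : T -> Y) (K : set T) :
  (forall W, tau W -> open (f @^-1` W)) -> compact K -> compact_in tau (f @` K).
Proof.
move=> fcont; rewrite (@compact_cover T) => Kco I U Uopen KU.
have [|D _ DU] := Kco {classic I} setT (fun i => f @^-1` U i)
    (fun i _ => fcont _ (Uopen i)).
  by move=> t Kt; have [i _ Ui] := KU (f t) (ex_intro2 _ _ t Kt erefl); exists i.
exists [set` D]; split; first exact: (finite_fset D).
by move=> _ [t Kt <-]; have [i Di Ui] := DU t Kt; exists i.
Qed.

(* 2^X is pointed by the empty set, so that the covering characterisation of
   compactness applies to it. *)
HB.instance Definition _ (X : Type) :=
  isPointed.Build {ptws X -> bool} (fun _ => false).

Lemma compact_ptws_bool (X : Type) : compact [set: {ptws X -> bool}].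
Proof.
have := @tychonoff {classic X} (fun _ => bool) (fun _ => setT)
  (fun _ => @finite_compact bool setT (@finite_finset bool setT)).
by have -> : [set f : {classic X} -> bool | forall i, setT (f i)] = setT
  by apply/seteqP; split.
Qed.

Lemma filter_finite_forall (T I : Type) (F : set_system T) (D : set I)
    (P : I -> set T) :
  Filter F -> finite_set D -> (forall i, D i -> F (P i)) ->
  \forall t \near F, forall i, D i -> P i t.
Proof.
move=> FF /(@finite_fsetP {classic I}) [D' ->] DP.
have := @filter_bigI T {classic I} D' P F FF DP.
by apply: filterS => t DPt i Di; exact: DPt.
Qed.

Lemma near_ptws_coord (X : Type) (A : {ptws X -> bool}) (x : X) :
  \forall B \near A, B x = A x.
Proof.
apply: (@proj_continuous {classic X} (fun _ => bool) x A [set A x]).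
by rewrite nbhs_principalE; apply/principal_filterP.
Qed.

Section HausdorffTopologicalSemigroup.
Variables (T : Type) (tau : set (set T)) (mul : T -> T -> T).
Hypothesis tau_top : is_topology tau.
Hypothesis mul_cont : cont_top (prod_top tau tau) tau (fun p => mul p.1 p.2).
Hypothesis tau_hausdorff : hausdorff_top tau.

Lemma open_of_locally_open (S : set T) :
  (forall f, S f -> exists U, [/\ tau U, U f & U `<=` S]) -> tau S.
Proof.
move=> Sloc; pose U (p : {f | S f}) := projT1 (cid (Sloc _ (projT2 p))).
have -> : S = \bigcup_p U p.
  apply/seteqP; split => [f Sf|f [p _]]; last first.
    by rewrite /U; case: cid => V /= [_ _]; exact.
  by exists (exist _ f Sf) => //; rewrite /U; case: cid => V /= [].
case: tau_top => _ tau_bigcup _; apply: tau_bigcup => p.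
by rewrite /U; case: cid => V /= [].
Qed.

Lemma right_translate_open (U : set T) (c : T) :
  tau U -> tau [set f | U (mul f c)].
Proof.
move=> Uopen; apply: open_of_locally_open => f Ufc.
have [U1 [V1 [U1open _ U1f V1c U1V1]]] := @mul_cont U Uopen (f, c) Ufc.
by exists U1; split => // g U1g; exact: U1V1.
Qed.

(* In a Hausdorff space points are closed, hence {f | f c <> d} is open. *)
Lemma right_translate_neq_open (c d : T) : tau [set f | mul f c <> d].
Proof.
apply: open_of_locally_open => f fcd.
have [U [V [Uopen _ Ufc Vd UV]]] := tau_hausdorff fcd.
exists [set g | U (mul g c)]; split => //; first exact: right_translate_open.
move=> g Ugc gcd; rewrite /= gcd in Ugc.
by have : (U `&` V) d by []; rewrite UV.
Qed.

End HausdorffTopologicalSemigroup.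

(* Composition in I(X) is written Defs.pcomp, since ssrfun also has a pcomp. *)
Section PointIdempotents.
Variable X : Type.

Lemma pbij_ext (f g : pbij X) : (forall x, f x = g x) -> f = g.
Proof.
case: f g => f finj [g ginj] /= fg.
have {}fg : f = g by apply: funext.
by subst g; congr PBij; exact: Prop_irrelevance.
Qed.

Definition ppoint (x : X) : pbij X := pid (fun y => `[< y = x >]).
Definition pempty : pbij X := pid (fun _ : X => false).

Lemma ppoint_neq_pempty (x : X) : ppoint x <> pempty.
Proof.
by move/(congr1 (fun f : pbij X => pfun f x)); rewrite /= /pid_fun asboolT.
Qed.

Lemma pid_comp_ppoint (D : X -> bool) (x : X) :
  Defs.pcomp (pid D) (ppoint x) = if D x then ppoint x else pempty.
Proof.
apply: pbij_ext => y; rewrite /= /pcomp_fun /= /pid_fun.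
have [->|yx] := pselect (y = x).
  by rewrite asboolT //; case: (D x); rewrite //= /pid_fun asboolT.
by rewrite asboolF //; case: (D x); rewrite //= /pid_fun asboolF.
Qed.

Lemma pid_comp_ppoint_eq (D A : X -> bool) (x : X) :
  Defs.pcomp (pid D) (ppoint x) = Defs.pcomp (pid A) (ppoint x) <-> D x = A x.
Proof.
rewrite !pid_comp_ppoint; split => [|->] //.
have neq := @ppoint_neq_pempty x.
by case: (D x); case: (A x) => // /esym.
Qed.

End PointIdempotents.

Lemma compact_idempotents_of_continuous (X : Type) (tau : set (set (pbij X))) :
  (forall W, tau W -> open ((fun A : {ptws X -> bool} => pid A) @^-1` W)) ->
  compact_in tau (@idempotents X).
Proof.
move=> pid_cont.
have -> : @idempotents X = (fun A : {ptws X -> bool} => pid A) @` setT.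
  by apply/seteqP; split => [_ [A ->]|_ [A _ <-]]; [exists A|exists A].
exact: compact_in_image pid_cont (@compact_ptws_bool X).
Qed.

Lemma continuous_of_compact_idempotents (X : Type) (tau : set (set (pbij X))) :
  is_topology tau ->
  cont_top (prod_top tau tau) tau (fun p => Defs.pcomp p.1 p.2) ->
  hausdorff_top tau -> compact_in tau (@idempotents X) ->
  forall W, tau W -> open ((fun A : {ptws X -> bool} => pid A) @^-1` W).
Proof.
move=> tau_top mul_cont tau_hausdorff Ecompact W Wopen; rewrite openE => A WA.
pose U (o : option X) :=
  if o is Some x
  then [set f | Defs.pcomp f (ppoint x) <> Defs.pcomp (pid A) (ppoint x)]
  else W.
have Uopen o : tau (U o).
  by case: o => [x|] //; exact: right_translate_neq_open.
have Ucover : @idempotents X `<=` \bigcup_o U o.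
  move=> _ [D ->]; have [WD|nWD] := pselect (W (pid D)); first by exists None.
  have [x DAx] : exists x, D x <> A x.
    apply/existsNP => DA; apply: nWD.
    by have -> : D = A by apply: funext.
  by exists (Some x) => //; rewrite /U /=; move/pid_comp_ppoint_eq.
have [F [Ffinite FU]] := Ecompact _ U Uopen Ucover.
have agree_near : \forall B \near A,
    forall o, F o -> if o is Some x then B x = A x else True.
  apply: (@filter_finite_forall _ _ (nbhs A) F
    (fun o B => if o is Some x then B x = A x else True) _ Ffinite) => -[x|] _.
  - exact: near_ptws_coord.
  - exact: filterT.
apply: filterS agree_near => B agree.
have [[x|] Fx Ux] := FU (pid B) (ex_intro _ B erefl) => //.
by case: Ux; apply/pid_comp_ppoint_eq; exact: (agree _ Fx).
Qed.

Theorem theorem3p5 (X : Type) (tau : set (set (pbij X))) :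
  top_inverse_semigroup tau -> hausdorff_top tau ->
  ((forall W, tau W -> open ((fun A : {ptws X -> bool} => pid A) @^-1` W))
   <-> compact_in tau (@idempotents X)).
Proof.
move=> [tau_top [mul_cont _]] tau_hausdorff; split.
- exact: compact_idempotents_of_continuous.
- exact: continuous_of_compact_idempotents.
Qed.
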